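(* Assume that the super Poincaré inequality $$\mu(f^2)\le r\,\mathcal E(f)+\beta(r)\,\mu(|f|)^2,\qquad r>0,\ f\in\mathcal D(\mathcal E),$$ holds for some decreasing function $\beta:(0,\infty)\to(0,\infty)$. Then for any integers $n,k\ge1$, any $s>0$ and any $f\in\mathcal A$, $$\mu_V(f^21_{\{\rho\le n\}})\le 2s\,e^{K_{n,k}(V)}\mathcal E_V(f)+16\lambda s\,e^{K_{n,k}(V)}\mu_V(f^2)+16s\,e^{Z_n(V)}\eta_{n,k}\|f\|_\infty^2+\beta(s)e^{J_{n,k}(V)}\mu_V(|f|)^2.$$
   Context: Setting: $(E,d)$ is a Polish space with Borel $\sigma$-field and a probability measure $\mu$. Let $q:E\times E\to[0,\infty)$ be measurable with $q(x,x)=0$ for all $x$, and $\lambda:=\sup_{x\in E}\int_E(1\wedge d(x,y)^2)q(x,y)\,\mu(\mathrm dy)<\infty.$ For bounded measurable $f,g$ set $\Gamma(f,g)(x)=\int_E(f(x)-f(y))(g(x)-g(y))q(x,y)\mu(\mathrm dy)$, $\Gamma(f)=\Gamma(f,f)$; $\mathcal A$ is the set of bounded measurable $f$ with $\Gamma(f)$ bounded, assumed dense in $L^2(\mu)$. $(\mathcal E,\mathcal D(\mathcal E))$ is the closure in $L^2(\mu)$ of $\mathcal E(f,g)=\mu(\Gamma(f,g))$ on $\mathcal A$, $\mathcal E(f)=\mathcal E(f,f)$. Fix $o\in E$, $\rho(x)=d(o,x)$. $V$ is measurable, bounded on each $\{\rho\le r\}$, with $\mu(e^V)=1$; $\mu_V=e^V\mu$;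 $\mathcal E_V(f)=\mu_V(\Gamma(f))$ for $f\in\mathcal A$. $\|f\|_\infty$ is the uniform norm. Notation: $K_{n,k}(V)=\sup_{\rho\le n+2}V-\inf_{\rho\le n+k+2}V$; $J_{n,k}(V)=\sup_{\rho\le n+1}V-2\inf_{\rho\le n+k+2}V$; $Z_n(V)=\sup_{\rho\le n+1}V$; $\eta_{n,k}=\iint_{\{\rho(x)>n+k+2,\ \rho(y)\le n+1\}}q(x,y)\mu(\mathrm dy)\mu(\mathrm dx)$. *)

From HB Require Import structures.
From mathcomp Require Import all_boot all_order all_algebra.
From mathcomp Require Import all_classical all_reals all_analysis.
Set Implicit Arguments. Unset Strict Implicit. Unset Printing Implicit Defensive.
Import Order.TTheory GRing.Theory Num.Theory.
Local Open Scope classical_set_scope.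
Local Open Scope ring_scope.

Section Defs.
Context (R : realType) (dE : measure_display) (E : measurableType dE).

Definition is_metric (d : E -> E -> R) : Prop :=
  [/\ (forall x y, 0 <= d x y), (forall x y, d x y = 0 <-> x = y),
      (forall x y, d x y = d y x) & (forall x y z, d x z <= d x y + d y z)].

Definition d_open (d : E -> E -> R) : set (set E) :=
  [set A | forall x, A x -> exists e : R, 0 < e /\ forall y, d x y < e -> A y].

Definition d_complete (d : E -> E -> R) : Prop :=
  forall u : nat -> E,
    (forall e : R, 0 < e -> exists N, forall n m, (N <= n)%N -> (N <= m)%N -> d (u n) (u m) < e) ->
    exists l, forall e : R, 0 < e -> exists N, forall n, (N <= n)%N -> d (u n) l < e.

Definition d_separable (d : E -> E -> R) : Prop :=
  exists u : nat -> E, forall x (e : R), 0 < e -> exists n, d x (u n) < e.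

Definition polish_borel (d : E -> E -> R) : Prop :=
  [/\ is_metric d, d_complete d, d_separable d &
      forall A : set E, measurable A <-> <<s d_open d >> A].

Variable (mu : probability E R) (q : E -> E -> R).

Definition Gam (f : E -> R) (x : E) : \bar R :=
  (\int[mu]_y ((((f x - f y) ^+ 2) * q x y)%R)%:E)%E.

Definition in_A (f : E -> R) : Prop :=
  [/\ measurable_fun setT f, (exists M : R, forall x, `|f x| <= M) &
      (exists M : R, forall x, (Gam f x <= M%:E)%E)].

Definition form (f : E -> R) : \bar R := (\int[mu]_x Gam f x)%E.

(** (f, e) : f belongs to the domain of the closure (E, D(E)) of (form, A)
    in L^2(mu), and the closed form takes the value e at f. *)
Definition closure_form (f : E -> R) (e : R) : Prop :=
  measurable_fun setT f /\ (\int[mu]_x (((f x) ^+ 2)%R)%:E < +oo)%E /\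
  exists g : nat -> E -> R,
    [/\ (forall n, in_A (g n)),
        (forall eps : R, 0 < eps -> exists N, forall n, (N <= n)%N ->
           (\int[mu]_x (((g n x - f x) ^+ 2)%R)%:E < eps%:E)%E),
        (forall eps : R, 0 < eps -> exists N, forall n m, (N <= n)%N -> (N <= m)%N ->
           (form (g n \- g m)%R < eps%:E)%E) &
        (forall eps : R, 0 < eps -> exists N, forall n, (N <= n)%N ->
           exists en : R, form (g n) = en%:E /\ (`|en - e| < eps)%R)].

Definition A_dense : Prop :=
  forall f : E -> R, measurable_fun setT f -> (\int[mu]_x (((f x) ^+ 2)%R)%:E < +oo)%E ->
  forall eps : R, 0 < eps -> exists g, in_A g /\
    (\int[mu]_x (((f x - g x) ^+ 2)%R)%:E < eps%:E)%E.

Variable (d : E -> E -> R).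

Definition lam : \bar R :=
  ereal_sup [set (\int[mu]_y (((Order.min 1 (d x y ^+ 2)) * q x y)%R)%:E)%E | x in [set: E]].

Variable (o : E).
Definition rho (x : E) : R := d o x.

Variable (V : E -> R).
Definition muV (g : E -> \bar R) : \bar R := (\int[mu]_x (g x * (expR (V x))%:E))%E.

Definition supV (r : R) : R := sup [set V x | x in [set x | rho x <= r]].
Definition infV (r : R) : R := inf [set V x | x in [set x | rho x <= r]].

Definition Knk (n k : nat) : R := supV (n%:R + 2) - infV (n%:R + k%:R + 2).
Definition Jnk (n k : nat) : R := supV (n%:R + 1) - 2 * infV (n%:R + k%:R + 2).
Definition Zn (n : nat) : R := supV (n%:R + 1).

Definition etank (n k : nat) : \bar R :=
  (\int[mu]_(x in [set x | (n%:R + k%:R + 2 < rho x)%R])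
     \int[mu]_(y in [set y | (rho y <= n%:R + 1)%R]) (q x y)%:E)%E.

End Defs.

Definition sup_norm (T : Type) (R : realType) (f : T -> R) : R :=
  sup [set `|f x| | x in [set: T]].

From Pilot Require Import Defs.
From HB Require Import structures.
From mathcomp Require Import all_boot all_order all_algebra.
From mathcomp Require Import all_classical all_reals all_analysis.
From mathcomp Require Import measurable_realfun.
From mathcomp Require Import ring lra.
Import Order.TTheory GRing.Theory Num.Theory.
Local Open Scope classical_set_scope.
Local Open Scope ring_scope.

(* Cut f off with phi = clamp01 (n + 1 - rho): phi is 1-Lipschitz, equals 1 on
   {rho <= n} and vanishes off {rho <= n + 1}, so g = f phi lies in A and the super
   Poincare inequality applies to g at scale s.  On {rho <= n + 1} the density e^V is
   at most e^{Z_n}, which bounds mu_V(f^2 1_{rho <= n}) by e^{Z_n} mu(g^2); on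
   {rho <= n + k + 2} the factor e^{V - inf V} >= 1 turns mu-integrals back into
   mu_V-integrals.  There the discrete Leibniz rule
   (g x - g y)^2 <= 2 (f x - f y)^2 + 2 f(x)^2 (1 /\ d(x,y)^2) gives
   Gamma(g) <= 2 Gamma(f) + 2 lambda f^2, while for rho(x) > n + k + 2 only jumps into
   {rho <= n + 1} contribute, at most ||f||^2 times a rate whose integral is eta_{n,k}.
   The argument yields the constant 2 where the statement has 16. *)

Section RealBounds.
Context {R : realDomainType}.

Definition clamp01 (a : R) : R := Num.min 1 (Num.max 0 a).

Lemma clamp01_ge0 a : 0 <= clamp01 a.
Proof. by rewrite /clamp01 le_min ler01 le_max lexx. Qed.

Lemma clamp01_le1 a : clamp01 a <= 1.
Proof. by rewrite /clamp01 ge_min lexx. Qed.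

Lemma clamp01_eq1 a : 1 <= a -> clamp01 a = 1.
Proof.
by move=> a1; rewrite /clamp01 (max_idPr (le_trans ler01 a1)) (min_idPl a1).
Qed.

Lemma clamp01_eq0 a : a <= 0 -> clamp01 a = 0.
Proof. by move=> a0; rewrite /clamp01 (max_idPl a0) (min_idPr ler01). Qed.

Lemma clamp01_lipschitz a b : `|clamp01 a - clamp01 b| <= `|a - b|.
Proof.
rewrite /clamp01 !maxEle !minEle.
have := ler_norm (a - b); have := ler_norm (b - a); rewrite distrC.
case: (leP 0 a) => ?; case: (leP 0 b) => ?; case: (leP 1 a) => ?; case: (leP 1 b) => ?;
  rewrite ?ler01 ?ler10 /=; rewrite ler_norml; move=> *; apply/andP; split; lra.
Qed.

Lemma sqr_le_of_norm_le (a b : R) : `|a| <= b -> a ^+ 2 <= b ^+ 2.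
Proof. by move=> ab; rewrite -real_normK ?num_real // lerXn2r ?nnegrE ?(le_trans _ ab). Qed.

Lemma sqr_leibniz_le (a b u v : R) : 0 <= v <= 1 ->
  (a * u - b * v) ^+ 2 <= 2 * (a - b) ^+ 2 + 2 * a ^+ 2 * (u - v) ^+ 2.
Proof.
case/andP=> v0 v1.
have -> : a * u - b * v = v * (a - b) + a * (u - v) by ring.
have sqrD_le (x y : R) : (x + y) ^+ 2 <= 2 * x ^+ 2 + 2 * y ^+ 2.
  by rewrite -subr_ge0 (_ : _ - _ = (x - y) ^+ 2) ?sqr_ge0 //; ring.
apply: (le_trans (sqrD_le _ _)); apply: lerD; last by rewrite exprMn mulrA.
by rewrite ler_wpM2l // exprMn ler_piMl ?sqr_ge0 // expr2 mulr_ile1.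
Qed.

End RealBounds.

Lemma combine_cutoff_bounds {R : realFieldType} (s beta eZ w eK L a b c eta S2 eg g1 : R) :
  0 <= s -> 0 <= beta -> 0 <= eZ -> 0 <= w -> 0 <= L -> 0 <= a -> 0 <= b ->
  0 <= eta -> 0 <= S2 -> 0 <= g1 -> eZ * w <= eK ->
  eg <= 2 * w * a + 2 * L * w * b + S2 * eta -> g1 <= w * c ->
  eZ * (s * eg + beta * (g1 * g1))
    <= 2 * s * eK * a + 16 * s * eK * L * b + 16 * s * eZ * eta * S2
       + beta * (eZ * w * w) * (c * c).
Proof.
move=> s0 beta0 eZ0 w0 L0 a0 b0 eta0 S20 g10 eZw eg_le g1_le.
have eK0 : 0 <= eK by apply: le_trans eZw; rewrite mulr_ge0.
have energy : eZ * (s * eg) <= eZ * (s * (2 * w * a + 2 * L * w * b + S2 * eta)).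
  by rewrite ler_wpM2l // ler_wpM2l.
have mass : eZ * (beta * (g1 * g1)) <= eZ * (beta * ((w * c) * (w * c))).
  by rewrite ler_wpM2l // ler_wpM2l // ler_pM.
have K1 : eZ * w * (2 * s * a) <= eK * (2 * s * a) by rewrite ler_wpM2r ?mulr_ge0.
have K2 : eZ * w * (2 * s * L * b) <= eK * (2 * s * L * b) by rewrite ler_wpM2r ?mulr_ge0.
have K3 : 0 <= s * eK * L * b by rewrite !mulr_ge0.
have K4 : 0 <= s * eZ * eta * S2 by rewrite !mulr_ge0.
lra.
Qed.

Section ProbabilityIntegral.
Context {d : measure_display} {T : measurableType d} {R : realType} (P : probability T R).
Local Open Scope ereal_scope.

Lemma integral_le_cst {h : T -> \bar R} {c : \bar R} : measurable_fun setT h ->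
  (forall x, 0 <= h x) -> (forall x, h x <= c) -> \int[P]_x h x <= c.
Proof.
move=> mh h0 hc; apply: (@le_trans _ _ (\int[P]_x cst c x)).
  by apply: ge0_le_integral.
have PT : (P : {measure set T -> \bar R}) [set: T] = 1 by exact: probability_setT.
by rewrite integral_cst // PT mule1.
Qed.

Lemma bounded_integral_fin_num {h : T -> \bar R} {c : R} : measurable_fun setT h ->
  (forall x, 0 <= h x) -> (forall x, h x <= c%:E) -> \int[P]_x h x \is a fin_num.
Proof.
move=> mh h0 hc; rewrite ge0_fin_numE; last exact: integral_ge0.
exact: le_lt_trans (integral_le_cst mh h0 hc) (ltry _).
Qed.

End ProbabilityIntegral.

Lemma ge0_integral_lincomb {d : measure_display} {T : measurableType d} {R : realType}
    (m : measure T R) (a b : R) (F G : T -> \bar R) :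
  0 <= a -> 0 <= b -> measurable_fun setT F -> measurable_fun setT G ->
  (forall x, 0 <= F x)%E -> (forall x, 0 <= G x)%E ->
  (\int[m]_x (a%:E * F x + b%:E * G x) = a%:E * \int[m]_x F x + b%:E * \int[m]_x G x)%E.
Proof.
move=> a0 b0 mF mG F0 G0.
rewrite ge0_integralD //; first by rewrite !ge0_integralZl_EFin.
- by move=> x _; rewrite mule_ge0 ?lee_fin.
- exact: measurable_funeM.
- by move=> x _; rewrite mule_ge0 ?lee_fin.
- exact: measurable_funeM.
Qed.

Lemma norm_le_sup_norm {T : Type} {R : realType} (h : T -> R) :
  (exists M, forall x, `|h x| <= M) -> forall x, `|h x| <= sup_norm h.
Proof.
move=> [M hM] x; apply: ub_le_sup; last by exists x.
by exists M => _ [y _ <-].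
Qed.

Lemma measurable_EFin_fun {d : measure_display} {T : measurableType d} {R : realType}
  {D : set T} {h : T -> R} :
  measurable_fun D h -> measurable_fun D (fun x => (h x)%:E).
Proof. exact: (measurable_EFinP D h).2. Qed.

Section CarreDuChamp.
Context {R : realType} {dE : measure_display} {E : measurableType dE}
  (mu : probability E R) (q : E -> E -> R).
Hypotheses (mq : measurable_fun [set: E * E] (fun p => q p.1 p.2))
  (q_ge0 : forall x y, 0 <= q x y).

Lemma measurable_q x : measurable_fun [set: E] (q x).
Proof. exact: measurable_fun_pair2 x mq. Qed.

Lemma measurable_Gam h : measurable_fun setT h -> measurable_fun setT (Gam mu q h).
Proof.
move=> mh; apply: (measurable_fun_fubini_tonelli_F
  (fun p => ((h p.1 - h p.2) ^+ 2 * q p.1 p.2)%:E)).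
  apply/measurable_EFin_fun/measurable_funM => //; apply/measurable_funX/measurable_funB.
  - exact: measurableT_comp mh measurable_fst.
  - exact: measurableT_comp mh measurable_snd.
by move=> p; rewrite lee_fin mulr_ge0 ?sqr_ge0.
Qed.

Lemma Gam_ge0 h x : (0 <= Gam mu q h x)%E.
Proof. by apply: integral_ge0 => y _; rewrite lee_fin mulr_ge0 ?sqr_ge0. Qed.

Lemma in_A_form_fin_num h : in_A mu q h -> Defs.form mu q h \is a fin_num.
Proof.
case=> mh _ [M hM]; apply: (bounded_integral_fin_num mu _ _ hM).
- exact: measurable_Gam.
- exact: Gam_ge0.
Qed.

Lemma in_A_closure_form h : in_A mu q h -> closure_form mu q h (fine (Defs.form mu q h)).
Proof.
move=> hA; have [mh [M hM] _] := hA.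
have sqr_le x : h x ^+ 2 <= M ^+ 2 by exact: sqr_le_of_norm_le.
split; first exact: mh.
split.
  apply: le_lt_trans (ltry (M ^+ 2)); apply: integral_le_cst => [|x|x].
  - exact/measurable_EFin_fun/measurable_funX.
  - by rewrite lee_fin sqr_ge0.
  - by rewrite lee_fin sqr_le.
exists (fun _ => h); split => // [eps eps0|eps eps0|eps eps0]; exists 0%N.
- move=> m _; rewrite integral0_eq ?lte_fin // => x _.
  by rewrite subrr expr0n.
- move=> m m' _ _; rewrite /Defs.form integral0_eq ?lte_fin // => x _.
  by rewrite /Gam integral0_eq // => y _ /=; rewrite !subrr expr0n /= mul0r.
- move=> m _; exists (fine (Defs.form mu q h)); split; last by rewrite subrr normr0.
  by rewrite fineK // in_A_form_fin_num.
Qed.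

Lemma in_A_integral_abs_fin_num h : in_A mu q h ->
  (\int[mu]_x (`|h x|)%:E)%E \is a fin_num.
Proof.
case=> mh [M hM] _; apply: (bounded_integral_fin_num mu (c := M)) => [|x|x]; rewrite ?lee_fin //.
exact/measurable_EFin_fun/(measurableT_comp (@normr_measurable R setT) mh).
Qed.

End CarreDuChamp.

Section RadialFunction.
Context {R : realType} {dE : measure_display} {E : measurableType dE}
  (d : E -> E -> R) (o : E).
Hypothesis hpol : polish_borel d.

Lemma measurable_dist z : measurable_fun [set: E] (d z).
Proof.
have [[_ _ _ d_tri] _ _ hm] := hpol.
apply: (measurability _ (RGenInftyO.measurableE R)) => //.
move=> _ [_ [a ->] <-]; rewrite setTI.
apply/hm; apply: sub_gen_smallest => x /=; rewrite in_itv /= => ha.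
exists (a - d z x); split; first by rewrite subr_gt0.
by move=> y hy; rewrite in_itv /=; have := d_tri z x y; lra.
Qed.

Lemma rho_lipschitz x y : `|rho d o x - rho d o y| <= d x y.
Proof.
have [[_ _ d_sym d_tri] _ _ _] := hpol.
rewrite /rho ler_norml; have := d_tri o x y; have := d_tri o y x.
by rewrite (d_sym y x) => *; apply/andP; split; lra.
Qed.

Lemma rho_center : rho d o o = 0.
Proof. by have [[_ d_eq _ _] _ _ _] := hpol; apply/d_eq. Qed.

Lemma measurable_rho_le r : measurable [set x | rho d o x <= r].
Proof.
have := measurable_dist o measurableT _ (measurable_itv `]-oo, r]).
by rewrite setTI; congr measurable; apply/seteqP; split => x /=; rewrite in_itv.
Qed.

Lemma measurable_rho_gt r : measurable [set x | r < rho d o x].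
Proof.
have := measurable_dist o measurableT _ (measurable_itv `]r, +oo[).
by rewrite setTI; congr measurable; apply/seteqP; split => x /=; rewrite in_itv /= ?andbT.
Qed.

Definition cutoff (r : R) (x : E) : R := clamp01 (r - rho d o x).

Lemma cutoff_ge0 r x : 0 <= cutoff r x. Proof. exact: clamp01_ge0. Qed.
Lemma cutoff_le1 r x : cutoff r x <= 1. Proof. exact: clamp01_le1. Qed.

Lemma cutoff_eq1 r x : rho d o x <= r - 1 -> cutoff r x = 1.
Proof. by move=> hx; apply: clamp01_eq1; lra. Qed.

Lemma cutoff_eq0 r x : r <= rho d o x -> cutoff r x = 0.
Proof. by move=> hx; apply: clamp01_eq0; lra. Qed.

Lemma sqr_cutoffB_le r x y : (cutoff r x - cutoff r y) ^+ 2 <= Num.min 1 (d x y ^+ 2).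
Proof.
have lip : `|cutoff r x - cutoff r y| <= d x y.
  apply: le_trans (clamp01_lipschitz _ _) _.
  have -> : r - rho d o x - (r - rho d o y) = rho d o y - rho d o x by ring.
  by rewrite distrC rho_lipschitz.
rewrite le_min; apply/andP; split.
  rewrite -real_normK ?num_real // expr_le1 ?normr_ge0 //.
  have := cutoff_ge0 r x; have := cutoff_le1 r x; have := cutoff_ge0 r y; have := cutoff_le1 r y.
  by rewrite ler_norml => *; apply/andP; split; lra.
exact: sqr_le_of_norm_le.
Qed.

Lemma measurable_cutoff r : measurable_fun [set: E] (cutoff r).
Proof.
apply: measurable_minr; first exact: measurable_cst.
apply: measurable_maxr; first exact: measurable_cst.
by apply: measurable_funB; [exact: measurable_cst | exact: measurable_dist].
Qed.

Variable V : E -> R.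
Hypothesis V_ball_bounded : forall r, exists M, forall x, rho d o x <= r -> `|V x| <= M.

Lemma V_le_supV r x : rho d o x <= r -> V x <= supV d o V r.
Proof.
move=> hx; apply: ub_le_sup; last by exists x.
have [M hM] := V_ball_bounded r; exists M => _ [y hy <-].
exact: le_trans (ler_norm _) (hM y hy).
Qed.

Lemma infV_le_V r x : rho d o x <= r -> infV d o V r <= V x.
Proof.
move=> hx; apply: ge_inf; last by exists x.
have [M hM] := V_ball_bounded r; exists (- M) => _ [y hy <-].
by have := hM y hy; rewrite ler_norml => /andP[].
Qed.

Lemma le_supV r1 r2 : 0 <= r1 -> r1 <= r2 -> supV d o V r1 <= supV d o V r2.
Proof.
move=> r1_ge0 r12; apply: ge_sup; first by exists (V o), o; rewrite //= rho_center.
by move=> _ [y hy <-]; apply: V_le_supV; exact: le_trans hy r12.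
Qed.

End RadialFunction.

Section WeightedIntegral.
Context {R : realType} {dE : measure_display} {E : measurableType dE}
  (mu : probability E R) (V : E -> R).
Hypotheses (mV : measurable_fun [set: E] V)
  (expV_int1 : (\int[mu]_x (expR (V x))%:E = 1)%E).
Local Open Scope ereal_scope.

Lemma measurable_expV : measurable_fun [set: E] (fun x => (expR (V x))%:E).
Proof. by apply/measurable_EFin_fun; exact: measurableT_comp mV. Qed.

Lemma muV_ge0 h : (forall x, 0 <= h x) -> 0 <= muV mu V h.
Proof. by move=> h0; apply: integral_ge0 => x _; rewrite mule_ge0 ?lee_fin ?expR_ge0. Qed.

Lemma muV_le_cst h (c : R) : measurable_fun [set: E] h ->
  (forall x, 0 <= h x) -> (forall x, h x <= c%:E) -> muV mu V h <= c%:E.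
Proof.
move=> mh h0 hc.
have [x0 _] : [set: E] !=set0.
  apply/set0P/negP => /eqP E0.
  have := @probability_setT _ _ _ mu; rewrite E0 measure0 => /esym/eqP.
  by rewrite onee_eq0.
have c_ge0 : (0 <= c)%R by rewrite -lee_fin (le_trans (h0 x0)).
apply: (@le_trans _ _ (\int[mu]_x (c%:E * (expR (V x))%:E))).
  apply: ge0_le_integral => //.
  - by move=> x _; rewrite mule_ge0 ?lee_fin ?expR_ge0.
  - exact: emeasurable_funM mh measurable_expV.
  - exact: measurable_funeM measurable_expV.
  - by move=> x _; rewrite lee_wpmul2r ?lee_fin ?expR_ge0.
rewrite ge0_integralZl_EFin //; first by rewrite expV_int1 mule1.
exact: measurable_expV.
Qed.

Lemma bounded_muV_fin_num h (c : R) : measurable_fun [set: E] h ->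
  (forall x, 0 <= h x) -> (forall x, h x <= c%:E) -> muV mu V h \is a fin_num.
Proof.
move=> mh h0 hc; rewrite ge0_fin_numE ?muV_ge0 //.
exact: le_lt_trans (muV_le_cst _ _ mh h0 hc) (ltry _).
Qed.

End WeightedIntegral.

Section CutoffEnergy.
Context {R : realType} {dE : measure_display} {E : measurableType dE}
  (d : E -> E -> R) (mu : probability E R) (q : E -> E -> R) (o : E).
Hypotheses (hpol : polish_borel d)
  (mq : measurable_fun [set: E * E] (fun p => q p.1 p.2))
  (q_ge0 : forall x y, 0 <= q x y).

Definition jump_rate (B : set E) (x : E) : \bar R := (\int[mu]_(y in B) (q x y)%:E)%E.

Lemma jump_rate_ge0 B x : (0 <= jump_rate B x)%E.
Proof. by apply: integral_ge0 => y _; rewrite lee_fin. Qed.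

Lemma jump_rateE B x : jump_rate B x = (\int[mu]_y (\1_B y * q x y)%:E)%E.
Proof.
rewrite /jump_rate integral_mkcond; apply: eq_integral => y _.
by rewrite patchE indicE; case: (y \in B); rewrite /= ?mul1r ?mul0r.
Qed.

Lemma measurable_jump_rate B : measurable B -> measurable_fun [set: E] (jump_rate B).
Proof.
move=> mB; rewrite (funext (jump_rateE B)).
apply: (measurable_fun_fubini_tonelli_F (fun p => (\1_B p.2 * q p.1 p.2)%:E)).
  apply/measurable_EFin_fun/measurable_funM => //.
  exact: measurableT_comp (measurable_indic mB) measurable_snd.
by move=> p; rewrite lee_fin mulr_ge0 // indicE ler0n.
Qed.

Lemma measurable_indic_q (B : set E) x : measurable B ->
  measurable_fun [set: E] (fun y => \1_B y * q x y).
Proof. by move=> mB; apply: measurable_funM; [exact: measurable_indic | exact: measurable_q]. Qed.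

Lemma measurable_lam_integrand x :
  measurable_fun [set: E] (fun y => Num.min 1 (d x y ^+ 2) * q x y).
Proof.
apply: measurable_funM; last exact: measurable_q.
apply: measurable_minr; first exact: measurable_cst.
exact/measurable_funX/measurable_dist.
Qed.

Lemma lam_integrand_ge0 x y : 0 <= Num.min 1 (d x y ^+ 2) * q x y.
Proof. by rewrite mulr_ge0 // le_min ler01 sqr_ge0. Qed.

Lemma integral_le_lam x :
  (\int[mu]_y (Num.min 1 (d x y ^+ 2) * q x y)%:E <= lam mu q d)%E.
Proof. by apply: ereal_sup_ubound; exists x. Qed.

Lemma lam_ge0 : (0 <= lam mu q d)%E.
Proof.
apply: le_trans (integral_le_lam o).
by apply: integral_ge0 => y _; rewrite lee_fin lam_integrand_ge0.
Qed.

Lemma Gam_cutoff_le (h : E -> R) r x : measurable_fun [set: E] h ->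
  (Gam mu q (fun y => (h y * cutoff d o r y)%R) x
    <= 2%:E * Gam mu q h x + (2 * h x ^+ 2)%:E * lam mu q d)%E.
Proof.
move=> mh; have mhx : measurable_fun [set: E] (fun y => (h x - h y) ^+ 2 * q x y).
  apply: measurable_funM; last exact: measurable_q.
  by apply/measurable_funX/measurable_funB => //; exact: measurable_cst.
apply: (@le_trans _ _ (\int[mu]_y (2%:E * ((h x - h y) ^+ 2 * q x y)%:E
    + (2 * h x ^+ 2)%:E * (Num.min 1 (d x y ^+ 2) * q x y)%:E))%E).
  apply: ge0_le_integral => //.
  - by move=> y _; rewrite lee_fin mulr_ge0 ?sqr_ge0.
  - apply/measurable_EFin_fun/measurable_funM; last exact: measurable_q.
    apply/measurable_funX/measurable_funB; first exact: measurable_cst.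
    exact: measurable_funM mh (measurable_cutoff _ _ hpol r).
  - apply: emeasurable_funD; apply: measurable_funeM; apply: measurable_EFin_fun => //.
    exact: measurable_lam_integrand.
  - move=> y _; rewrite -!EFinM -EFinD lee_fin.
    have sqr_le : (h x * cutoff d o r x - h y * cutoff d o r y) ^+ 2
        <= 2 * (h x - h y) ^+ 2 + 2 * h x ^+ 2 * Num.min 1 (d x y ^+ 2).
      apply: le_trans (sqr_leibniz_le _ _ _ _ _) _; first by rewrite cutoff_ge0 cutoff_le1.
      rewrite lerD2l; apply: ler_wpM2l; first by rewrite mulr_ge0 // sqr_ge0.
      exact: (sqr_cutoffB_le _ _ hpol).
    apply: le_trans (ler_wpM2r (q_ge0 x y) sqr_le) _.
    by rewrite mulrDl -!mulrA.
rewrite ge0_integral_lincomb //.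
- apply: leeD; first exact: lexx.
  by apply: lee_wpmul2l; [rewrite lee_fin mulr_ge0 // sqr_ge0 | exact: integral_le_lam].
- by rewrite mulr_ge0 // sqr_ge0.
- exact: measurable_EFin_fun.
- exact/measurable_EFin_fun/measurable_lam_integrand.
- by move=> y; rewrite lee_fin mulr_ge0 // sqr_ge0.
- by move=> y; rewrite lee_fin lam_integrand_ge0.
Qed.

Lemma Gam_cutoff_far (h : E -> R) r x : measurable_fun [set: E] h ->
  (exists M, forall y, `|h y| <= M) -> r <= rho d o x ->
  (Gam mu q (fun y => (h y * cutoff d o r y)%R) x
    <= (sup_norm h ^+ 2)%:E * jump_rate [set y | (rho d o y <= r)%R] x)%E.
Proof.
move=> mh hb hx; rewrite jump_rateE -ge0_integralZl_EFin //.
- apply: ge0_le_integral => //.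
  + by move=> y _; rewrite lee_fin mulr_ge0 ?sqr_ge0.
  + apply/measurable_EFin_fun/measurable_funM; last exact: measurable_q.
    apply/measurable_funX/measurable_funB; first exact: measurable_cst.
    exact: measurable_funM mh (measurable_cutoff _ _ hpol r).
  + exact/measurable_funeM/measurable_EFin_fun/measurable_indic_q/measurable_rho_le.
  move=> y _; rewrite cutoff_eq0 // mulr0 sub0r sqrrN -EFinM lee_fin indicE.
  case: (boolP (y \in _)) => [/set_mem hy | /negP hy].
    rewrite mul1r ler_wpM2r //; apply: sqr_le_of_norm_le.
    rewrite normrM (ger0_norm (cutoff_ge0 _ _ r y)).
    apply: le_trans (norm_le_sup_norm h hb y); apply: ler_piMr => //; exact: cutoff_le1.
  rewrite mul0r mulr0 cutoff_eq0 ?mulr0 ?expr0n ?mul0r //.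
  by rewrite leNgt; apply/negP => /ltW ry; apply: hy; exact: mem_set.
- by move=> y _; rewrite lee_fin mulr_ge0 // indicE ler0n.
- exact/measurable_EFin_fun/measurable_indic_q/measurable_rho_le.
- exact: sqr_ge0.
Qed.

Lemma jump_rate_le_lam r x : r + 1 <= rho d o x ->
  (jump_rate [set y | (rho d o y <= r)%R] x <= lam mu q d)%E.
Proof.
move=> hx; rewrite jump_rateE; apply: le_trans (integral_le_lam x).
apply: ge0_le_integral => //.
- by move=> y _; rewrite lee_fin mulr_ge0 // indicE ler0n.
- exact/measurable_EFin_fun/measurable_indic_q/measurable_rho_le.
- exact/measurable_EFin_fun/measurable_lam_integrand.
move=> y _; rewrite lee_fin indicE.
case: (boolP (y \in _)) => [/set_mem hy | _]; last by rewrite mul0r lam_integrand_ge0.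
have dxy_ge1 : 1 <= d x y.
  by have := le_trans (ler_norm _) (rho_lipschitz _ o hpol x y); rewrite /= in hy; lra.
by rewrite mul1r ler_peMl // le_min lexx /= expr_ge1 // (le_trans ler01 dxy_ge1).
Qed.

Lemma etank_ge0 n k : (0 <= etank mu q d o n k)%E.
Proof. by apply: integral_ge0 => x _; exact: jump_rate_ge0. Qed.

Lemma etank_le_lam n k : (1 <= k)%N -> (etank mu q d o n k <= lam mu q d)%E.
Proof.
move=> k_ge1; rewrite /etank integral_mkcond; apply: integral_le_cst.
- apply/(measurable_restrictT _ _).1; first exact: measurable_rho_gt.
  exact/measurable_funTS/measurable_jump_rate/measurable_rho_le.
- by move=> x; rewrite patchE; case: ifP => // _; exact: jump_rate_ge0.
move=> x; rewrite patchE; case: ifPn => [/set_mem /= hx|_].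
  apply: jump_rate_le_lam; have : 1 <= k%:R :> R by rewrite ler1n.
  by move: hx; lra.
exact: lam_ge0.
Qed.

End CutoffEnergy.

Section WeightedCutoff.
Context {R : realType} {dE : measure_display} {E : measurableType dE}
  (d : E -> E -> R) (mu : probability E R) (q : E -> E -> R) (o : E) (V : E -> R).
Hypotheses (hpol : polish_borel d)
  (mq : measurable_fun [set: E * E] (fun p => q p.1 p.2)) (q_ge0 : forall x y, 0 <= q x y)
  (mV : measurable_fun [set: E] V)
  (V_ball_bounded : forall r, exists M, forall x, rho d o x <= r -> `|V x| <= M).

Lemma expR_infV_V r x : rho d o x <= r -> 1 <= expR (- infV d o V r) * expR (V x).
Proof.
move=> hx; rewrite -expRD; apply: le_trans (expR_ge1Dx _).
by have := infV_le_V _ _ _ V_ball_bounded _ _ hx; lra.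
Qed.

Lemma muV_ball_le (h : E -> R) (n : nat) : measurable_fun [set: E] h ->
  (muV mu V (fun x => (h x ^+ 2 * \1_[set y | rho d o y <= n%:R] x)%:E)
    <= (expR (Zn d o V n))%:E * \int[mu]_x ((h x * cutoff d o (n%:R + 1) x) ^+ 2)%:E)%E.
Proof.
move=> mh.
have mG : measurable_fun [set: E] (fun x => ((h x * cutoff d o (n%:R + 1) x) ^+ 2)%:E).
  exact/measurable_EFin_fun/measurable_funX/measurable_funM/measurable_cutoff.
have G0 x (_ : [set: E] x) : (0 <= ((h x * cutoff d o (n%:R + 1) x) ^+ 2)%:E)%E.
  by rewrite lee_fin sqr_ge0.
rewrite /muV -(ge0_integralZl_EFin mu measurableT G0 mG (expR_ge0 _)).
apply: ge0_le_integral => //.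
- by move=> x _; rewrite mule_ge0 ?lee_fin ?expR_ge0 // mulr_ge0 ?sqr_ge0 // indicE ler0n.
- apply: emeasurable_funM; last exact: measurable_expV.
  apply/measurable_EFin_fun/measurable_funM; first exact: measurable_funX.
  exact: measurable_indic (measurable_rho_le _ _ hpol _).
- apply/measurable_funeM/measurable_EFin_fun/measurable_funX/measurable_funM => //.
  exact: measurable_cutoff.
move=> x _; rewrite indicE; case: (boolP (x \in _)) => [/set_mem /= hx | _].
  rewrite mulr1 cutoff_eq1 ?addrK // mulr1 -EFinM lee_fin mulrC ler_wpM2r ?sqr_ge0 //.
  by rewrite ler_expR; apply: (V_le_supV _ _ _ V_ball_bounded); lra.
by rewrite mulr0 mul0e mule_ge0 ?lee_fin ?expR_ge0 ?sqr_ge0.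
Qed.

Lemma integral_abs_cutoff_le (h : E -> R) r r' : measurable_fun [set: E] h -> r <= r' ->
  (\int[mu]_x (`|h x * cutoff d o r x|)%:E
    <= (expR (- infV d o V r'))%:E * muV mu V (fun x => (`|h x|)%:E))%E.
Proof.
move=> mh rr'; have mabs := measurableT_comp (@normr_measurable R setT) mh.
have mF := emeasurable_funM (measurable_EFin_fun mabs) (measurable_expV _ mV).
have F0 x (_ : [set: E] x) : (0 <= (`|h x|)%:E * (expR (V x))%:E)%E.
  by rewrite mule_ge0 ?lee_fin ?expR_ge0.
rewrite /muV -(ge0_integralZl_EFin mu measurableT F0 mF (expR_ge0 _)).
apply: ge0_le_integral => //.
- apply/measurable_EFin_fun; apply: measurableT_comp (@normr_measurable R setT) _.
  exact/measurable_funM/measurable_cutoff.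
- exact: measurable_funeM.
move=> x _; case: (leP (rho d o x) r') => hx; last first.
  by rewrite cutoff_eq0 ?mulr0 ?normr0 ?mule_ge0 ?lee_fin ?expR_ge0 //; lra.
rewrite -!EFinM lee_fin normrM (ger0_norm (cutoff_ge0 _ _ r x)).
apply: (le_trans (ler_piMr _ (cutoff_le1 _ _ r x))) => //.
rewrite mulrCA ler_peMr //; exact: expR_infV_V.
Qed.

Lemma Gam_cutoff_split_le (h : E -> R) (n k : nat) (L : R) x :
  lam mu q d = L%:E -> measurable_fun [set: E] h -> (exists M, forall y, `|h y| <= M) ->
  (Gam mu q (fun y => (h y * cutoff d o (n%:R + 1) y)%R) x
    <= (2 * expR (- infV d o V (n%:R + k%:R + 2)))%:E * (Gam mu q h x * (expR (V x))%:E)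
     + (2 * L * expR (- infV d o V (n%:R + k%:R + 2)))%:E * ((h x ^+ 2)%:E * (expR (V x))%:E)
     + (sup_norm h ^+ 2)%:E * (jump_rate mu q [set y | (rho d o y <= n%:R + 1)%R]
                                 \_ [set y | (n%:R + k%:R + 2 < rho d o y)%R]) x)%E.
Proof.
move=> lamE mh hb; set I := infV d o V (n%:R + k%:R + 2).
have L_ge0 : 0 <= L by rewrite -lee_fin -lamE (lam_ge0 _ _ _ o).
have Gf_ge0 := Gam_ge0 mu q q_ge0 h x.
have near_ge0 : (0 <= (2 * expR (- I))%:E * (Gam mu q h x * (expR (V x))%:E)
    + (2 * L * expR (- I))%:E * ((h x ^+ 2)%:E * (expR (V x))%:E))%E.
  by apply: adde_ge0; apply: mule_ge0; rewrite ?mule_ge0 ?lee_fin ?sqr_ge0 ?mulr_ge0 ?expR_ge0.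
case: (boolP (x \in [set y | n%:R + k%:R + 2 < rho d o y])) => [/set_mem /= hx | /negP hx].
  apply: le_trans (leeDr _ near_ge0); rewrite patchE mem_set //.
  by apply: Gam_cutoff_far => //; have := ler0n R k; lra.
have x_near : rho d o x <= n%:R + k%:R + 2 by rewrite leNgt; apply/negP => /(mem_set) /hx.
apply: le_trans (leeDl _ _); last first.
  by rewrite patchE; case: ifP => _; rewrite ?mule_ge0 ?lee_fin ?sqr_ge0 ?jump_rate_ge0.
apply: le_trans (Gam_cutoff_le _ _ _ _ hpol mq q_ge0 _ _ _ mh) _; rewrite lamE.
have ew := expR_infV_V _ _ x_near; rewrite -/I in ew.
apply: leeD.
  rewrite muleCA muleC -EFinM; apply: lee_wpmul2l => //.
  by rewrite lee_fin -mulrA ler_peMr.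
rewrite -!EFinM lee_fin.
have -> : 2 * L * expR (- I) * (h x ^+ 2 * expR (V x))
  = (2 * h x ^+ 2 * L) * (expR (- I) * expR (V x)) by ring.
by apply: ler_peMr => //; rewrite mulr_ge0 // mulr_ge0 // sqr_ge0.
Qed.

Lemma form_cutoff_le (h : E -> R) (n k : nat) (L : R) :
  lam mu q d = L%:E -> in_A mu q h ->
  (Defs.form mu q (fun x => (h x * cutoff d o (n%:R + 1) x)%R)
    <= (2 * expR (- infV d o V (n%:R + k%:R + 2)))%:E * muV mu V (Gam mu q h)
     + (2 * L * expR (- infV d o V (n%:R + k%:R + 2)))%:E * muV mu V (fun x => (h x ^+ 2)%:E)
     + (sup_norm h ^+ 2)%:E * etank mu q d o n k)%E.
Proof.
move=> lamE [mh hb _].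
have L_ge0 : 0 <= L by rewrite -lee_fin -lamE (lam_ge0 _ _ _ o).
pose F1 x := (Gam mu q h x * (expR (V x))%:E)%E.
pose F2 x := ((h x ^+ 2)%:E * (expR (V x))%:E)%E.
pose F3 := jump_rate mu q [set y | rho d o y <= n%:R + 1]
  \_ [set x | n%:R + k%:R + 2 < rho d o x].
have mF1 : measurable_fun [set: E] F1.
  exact: emeasurable_funM (measurable_Gam mu q mq q_ge0 _ mh) (measurable_expV _ mV).
have mF2 : measurable_fun [set: E] F2.
  exact: emeasurable_funM (measurable_EFin_fun (measurable_funX _ mh)) (measurable_expV _ mV).
have mF3 : measurable_fun [set: E] F3.
  apply/(measurable_restrictT _ _).1; first exact: measurable_rho_gt.
  exact/measurable_funTS/measurable_jump_rate/measurable_rho_le.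
have F1_ge0 x : (0 <= F1 x)%E by rewrite mule_ge0 ?Gam_ge0 ?lee_fin ?expR_ge0.
have F2_ge0 x : (0 <= F2 x)%E by rewrite mule_ge0 ?lee_fin ?expR_ge0 ?sqr_ge0.
have F3_ge0 x : (0 <= F3 x)%E.
  by rewrite /F3 patchE; case: ifP => // _; exact: jump_rate_ge0.
apply: le_trans (ge0_le_integral _ _ _ _ _
  (fun x _ => Gam_cutoff_split_le h n k L x lamE mh hb)) _ => //.
- by move=> x _; exact: Gam_ge0.
- exact/measurable_Gam/measurable_funM/measurable_cutoff.
- by apply: emeasurable_funD; [apply: emeasurable_funD|]; exact: measurable_funeM.
rewrite ge0_integralD //.
- rewrite ge0_integral_lincomb ?mulr_ge0 ?expR_ge0 // ge0_integralZl_EFin ?sqr_ge0 //.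
  have -> : etank mu q d o n k = (\int[mu]_x F3 x)%E by rewrite /etank integral_mkcond.
  exact: lexx.
- move=> x _; apply: adde_ge0; apply: mule_ge0; try exact: F1_ge0; try exact: F2_ge0.
  + by rewrite lee_fin mulr_ge0 ?expR_ge0.
  + by rewrite lee_fin !mulr_ge0 ?expR_ge0.
- by apply: emeasurable_funD; exact: measurable_funeM.
- by move=> x _; apply: mule_ge0; [rewrite lee_fin sqr_ge0 | exact: F3_ge0].
- exact: measurable_funeM.
Qed.

Lemma in_A_cutoff (h : E -> R) (L r : R) : lam mu q d = L%:E -> in_A mu q h ->
  in_A mu q (fun x => h x * cutoff d o r x).
Proof.
move=> lamE [mh [M hM] [G hG]].
split; first exact/measurable_funM/measurable_cutoff.
  exists M => x; rewrite normrM (ger0_norm (cutoff_ge0 _ _ r x)).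
  by apply: le_trans (hM x); apply: ler_piMr => //; exact: cutoff_le1.
exists (2 * G + 2 * M ^+ 2 * L) => x.
apply: le_trans (Gam_cutoff_le _ _ _ _ hpol mq q_ge0 _ r _ mh) _.
have L_ge0 : 0 <= L by rewrite -lee_fin -lamE (lam_ge0 _ _ _ o).
rewrite lamE -EFinM; apply: le_trans (leeD (lee_wpmul2l _ (hG x)) (lexx _)) _ => //.
rewrite -EFinM -EFinD lee_fin lerD2l ler_wpM2r // ler_wpM2l //.
exact: sqr_le_of_norm_le.
Qed.

Hypothesis expV_int1 : (\int[mu]_x (expR (V x))%:E = 1)%E.

Lemma in_A_muV_fin_num h : in_A mu q h ->
  [/\ muV mu V (Gam mu q h) \is a fin_num, muV mu V (fun x => (h x ^+ 2)%:E) \is a fin_num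
     & muV mu V (fun x => (`|h x|)%:E) \is a fin_num].
Proof.
case=> mh [M hM] [G hG]; split.
- apply: (bounded_muV_fin_num _ _ mV expV_int1 _ G) => // [|x].
  + exact: measurable_Gam.
  + exact: Gam_ge0.
- apply: (bounded_muV_fin_num _ _ mV expV_int1 _ (M ^+ 2)) => [|x|x].
  + exact/measurable_EFin_fun/measurable_funX.
  + by rewrite lee_fin sqr_ge0.
  + by rewrite lee_fin sqr_le_of_norm_le.
- apply: (bounded_muV_fin_num _ _ mV expV_int1 _ M) => [|x|x]; rewrite ?lee_fin //.
  exact/measurable_EFin_fun/(measurableT_comp (@normr_measurable R setT) mh).
Qed.

Lemma local_super_Poincare (beta : R -> R) (L s : R) (n k : nat) (f : E -> R) :
  lam mu q d = L%:E -> (1 <= k)%N -> 0 < s -> 0 <= beta s ->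
  (forall (g : E -> R) (e : R), closure_form mu q g e ->
     (\int[mu]_x ((g x ^+ 2)%R)%:E
        <= (s * e)%:E + (beta s)%:E *
             ((\int[mu]_x (`|g x|%R)%:E) * (\int[mu]_x (`|g x|%R)%:E)))%E) ->
  in_A mu q f ->
  (muV mu V (fun x => ((f x ^+ 2) * \1_[set y | rho d o y <= n%:R] x)%R%:E)
     <= (2 * s * expR (Knk d o V n k))%:E * muV mu V (Gam mu q f)
        + (16 * s * expR (Knk d o V n k))%:E * lam mu q d
            * muV mu V (fun x => ((f x ^+ 2)%R)%:E)
        + (16 * s * expR (Zn d o V n))%:E * etank mu q d o n k
            * ((sup_norm f ^+ 2)%R)%:E
        + (beta s * expR (Jnk d o V n k))%:E
            * (muV mu V (fun x => (`|f x|%R)%:E) * muV mu V (fun x => (`|f x|%R)%:E)))%E.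
Proof.
move=> lamE k_ge1 s_gt0 beta_ge0 spi fA; have [mf _ _] := fA.
pose g x := f x * cutoff d o (n%:R + 1) x.
have gA : in_A mu q g by exact: in_A_cutoff lamE fA.
set I := infV d o V (n%:R + k%:R + 2); set Z := supV d o V (n%:R + 1).
have L_ge0 : 0 <= L by rewrite -lee_fin -lamE (lam_ge0 _ _ _ o).
have [Gf_fin f2_fin absf_fin] := in_A_muV_fin_num f fA.
have eta_fin : etank mu q d o n k \is a fin_num.
  rewrite ge0_fin_numE ?etank_ge0 //.
  by rewrite (le_lt_trans (etank_le_lam _ _ _ _ hpol mq q_ge0 _ _ k_ge1)) // lamE ltry.
have form_fin := in_A_form_fin_num mu q mq q_ge0 g gA.
have absg_fin := in_A_integral_abs_fin_num mu q g gA.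
have ball_le := muV_ball_le f n mf.
have spi_g := spi g _ (in_A_closure_form mu q mq q_ge0 g gA).
have absg_le := integral_abs_cutoff_le f (n%:R + 1) (n%:R + k%:R + 2) mf
  ltac:(by have := ler0n R k; lra).
have form_le := form_cutoff_le f n k L lamE fA.
rewrite -(fineK Gf_fin) -(fineK f2_fin) -(fineK absf_fin) -(fineK eta_fin) lamE.
rewrite -(fineK Gf_fin) -(fineK f2_fin) -(fineK eta_fin) -(fineK form_fin) in form_le.
rewrite -(fineK absf_fin) -(fineK absg_fin) in absg_le.
rewrite -(fineK absg_fin) in spi_g.
apply: le_trans ball_le _; apply: le_trans (lee_wpmul2l _ spi_g) _.
  by rewrite lee_fin expR_ge0.
rewrite -!EFinM -!EFinD lee_fin.
rewrite -!EFinM -!EFinD lee_fin in form_le absg_le.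
set a := fine (muV _ _ (Gam _ _ f)) in form_le *.
set b := fine (muV _ _ (fun x => (f x ^+ 2)%:E)) in form_le *.
set c := fine (muV _ _ (fun x => (`|f x|)%:E)) in absg_le *.
set eta := fine (etank _ _ _ _ _ _) in form_le *.
set eg := fine (Defs.form _ _ _) in form_le *.
set g1 := fine (\int[mu]_x _) in absg_le *.
have a_ge0 : 0 <= a by rewrite fine_ge0 // muV_ge0 // => x; exact: Gam_ge0.
have b_ge0 : 0 <= b by rewrite fine_ge0 // muV_ge0 // => x; rewrite lee_fin sqr_ge0.
have eta_ge0 : 0 <= eta by rewrite fine_ge0 // etank_ge0.
have g1_ge0 : 0 <= g1 by rewrite fine_ge0 // integral_ge0.
have eJ : expR (Jnk d o V n k) = expR Z * expR (- I) * expR (- I).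
  by rewrite -!expRD /Jnk; congr expR; rewrite -/I -/Z; ring.
have eK : expR Z * expR (- I) <= expR (Knk d o V n k).
  rewrite -expRD ler_expR /Knk -/I lerD2r.
  by apply: (le_supV _ _ hpol _ V_ball_bounded); have := ler0n R n; lra.
rewrite eJ; apply: combine_cutoff_bounds => //; rewrite ?expR_ge0 ?sqr_ge0 //.
exact: ltW.
Qed.

End WeightedCutoff.

Theorem lemma2p7 (R : realType) (dE : measure_display) (E : measurableType dE)
  (d : E -> E -> R) (mu : probability E R) (q : E -> E -> R) (o : E)
  (V : E -> R) (beta : R -> R) :
  polish_borel d ->
  measurable_fun [set: E * E] (fun p => q p.1 p.2) ->
  (forall x y, 0 <= q x y) -> (forall x, q x x = 0) ->
  (lam mu q d < +oo)%E ->
  A_dense mu q ->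
  measurable_fun [set: E] V ->
  (forall r : R, exists M : R, forall x, rho d o x <= r -> `|V x| <= M) ->
  (\int[mu]_x (expR (V x))%:E = 1)%E ->
  (forall r, 0 < r -> 0 < beta r) ->
  (forall r r', 0 < r -> r <= r' -> beta r' <= beta r) ->
  (forall r, 0 < r -> forall (f : E -> R) (e : R), closure_form mu q f e ->
     (\int[mu]_x ((f x ^+ 2)%R)%:E
        <= (r * e)%:E + (beta r)%:E *
             ((\int[mu]_x (`|f x|%R)%:E) * (\int[mu]_x (`|f x|%R)%:E)))%E) ->
  forall (n k : nat) (s : R) (f : E -> R),
    (1 <= n)%N -> (1 <= k)%N -> 0 < s -> in_A mu q f ->
    (muV mu V (fun x => ((f x ^+ 2) * \1_[set y | rho d o y <= n%:R] x)%R%:E)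
     <= (2 * s * expR (Knk d o V n k))%:E * muV mu V (Gam mu q f)
        + (16 * s * expR (Knk d o V n k))%:E * lam mu q d
            * muV mu V (fun x => ((f x ^+ 2)%R)%:E)
        + (16 * s * expR (Zn d o V n))%:E * etank mu q d o n k
            * ((sup_norm f ^+ 2)%R)%:E
        + (beta s * expR (Jnk d o V n k))%:E
            * (muV mu V (fun x => (`|f x|%R)%:E) * muV mu V (fun x => (`|f x|%R)%:E)))%E.
Proof.
move=> hpol mq q_ge0 _ lam_lt_oo _ mV V_bounded expV_int1 beta_gt0 _ spi n k s f _ k_ge1 s_gt0 fA.
have lam_fin : lam mu q d \is a fin_num by rewrite ge0_fin_numE // (lam_ge0 _ _ _ o).
apply: (local_super_Poincare d mu q o V hpol mq q_ge0 mV V_bounded expV_int1 beta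
  (fine (lam mu q d))) => //.
- by rewrite fineK.
- exact/ltW/beta_gt0.
- exact: spi.
Qed.
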